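(* Let $k\ge 1$. Let $f, g_1,\ldots,g_k:(-\infty,0)\to\mathbb{R}$ and $s:[0,\infty)\to\mathbb{R}$ be ordinal decreasing functions that are strictly positive at every point of their domains. Consider the recursive algorithm \[ M(x)=\begin{cases} f(x), & x<0,\\ g_1\bigl(-M(x-g_2(-M(x-\cdots-g_k(-M(x-s(x)))\cdots)))\bigr), & x\ge 0.\end{cases} \] Then for every $x\in\mathbb{R}$ the computation of $M(x)$ halts (i.e. the recursion is well-founded and $M(x)$ is a well-defined real number), and the resulting function $M:\mathbb{R}\to\mathbb{R}$ is ordinal decreasing.
   Context: For $D\subseteq\mathbb{R}$ and $h:D\to\mathbb{R}$, a strictly decreasing sequence $x_1>x_2>x_3>\cdots$ of points of $D$ is called $h$-bad if $h(x_1)>h(x_2)>h(x_3)>\cdots$. The function $h$ is called ordinal decreasing if there is no infinite $h$-bad sequence. *)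

From Stdlib Require Import Reals Lra Lia.
Open Scope R_scope.

Definition ordinal_decreasing (D : R -> Prop) (h : R -> R) : Prop :=
  ~ (exists u : nat -> R,
       (forall n, D (u n)) /\
       (forall n, u (S n) < u n) /\
       (forall n, h (u (S n)) < h (u n))).

(* Big-step operational semantics of the recursive algorithm
     M(x) = f(x)                                   if x < 0
     M(x) = g_1(-M(x - g_2(-M(x - ... - g_k(-M(x - s(x))) ...))))  if x >= 0.
   [Eval x v] : the computation of M(x) halts with output v.
   [Chain x j a] : the j-th nested inner call (1 <= j <= k) halts with value a, where
     the k-th inner call is M(x - s(x)) and the j-th (j < k) is
     M(x - g_{j+1}(-a_{j+1})).
   A call g_i(y) is only defined when y lies in the domain (-oo,0) of g_i. *)
Inductive Eval (k : nat) (f s : R -> R) (g : nat -> R -> R) : R -> R -> Prop :=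
| Eval_neg : forall x, x < 0 -> Eval k f s g x (f x)
| Eval_nonneg : forall x a, 0 <= x -> Chain k f s g x 1 a -> - a < 0 ->
    Eval k f s g x (g 1%nat (- a))
with Chain (k : nat) (f s : R -> R) (g : nat -> R -> R) : R -> nat -> R -> Prop :=
| Chain_base : forall x a, Eval k f s g (x - s x) a -> Chain k f s g x k a
| Chain_step : forall x j b a, (j < k)%nat -> Chain k f s g x (S j) b -> - b < 0 ->
    Eval k f s g (x - g (S j) (- b)) a -> Chain k f s g x j a.

(* Let z be the supremum of the x such that M halts on (-oo, x] and is ordinal
   decreasing there; z >= 0 because M = f on the negative reals.  Just right of z,
   M(u) = g_1(-M(u - shift_(k-1) u)), where the nested calls are made at the points
   u - shift_d u.  By induction on d, shift_d is positive and ordinal decreasing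
   on [z, z + e): a descending run of shift_(d+1) = g(-M(u - shift_d u)) becomes,
   after passing twice to a subsequence because g and M (left of z) are ordinal
   decreasing, a descending run of shift_d.  A positive ordinal decreasing function
   exceeds u - z for u close enough to z on the right, so all nested calls land
   left of z, where M is already known to halt.  Hence M halts and is ordinal
   decreasing on some [z, z + e), contradicting the choice of z. *)

From Stdlib Require Import Reals Lra Lia Classical IndefiniteDescription ClassicalEpsilon.
Open Scope R_scope.

Definition increasing_index (phi : nat -> nat) : Prop :=
  forall n m, (n < m)%nat -> (phi n < phi m)%nat.
Definition strictly_decreasing (u : nat -> R) : Prop :=
  forall n m, (n < m)%nat -> u m < u n.
Definition strictly_increasing (u : nat -> R) : Prop :=
  forall n m, (n < m)%nat -> u n < u m.
Definition nondecreasing (u : nat -> R) : Prop :=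
  forall n m, (n < m)%nat -> u n <= u m.

Lemma succ_chain {A : Type} (Rel : A -> A -> Prop) (a : nat -> A) :
  (forall x y w, Rel x y -> Rel y w -> Rel x w) ->
  (forall i, Rel (a i) (a (S i))) -> forall n m, (n < m)%nat -> Rel (a n) (a m).
Proof.
  intros Htrans Hsucc n m Hnm.
  induction Hnm; [apply Hsucc | eapply Htrans; eauto].
Qed.

Lemma strictly_decreasing_succ (u : nat -> R) :
  (forall i, u (S i) < u i) -> strictly_decreasing u.
Proof. intros Hu n m. apply (succ_chain (fun a b => b < a) u); [intros; lra | exact Hu]. Qed.

Lemma increasing_index_ge (phi : nat -> nat) :
  increasing_index phi -> forall n, (n <= phi n)%nat.
Proof. intros Hphi n. induction n; [lia|]. specialize (Hphi n (S n)). lia. Qed.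

Lemma strictly_decreasing_comp (u : nat -> R) (phi : nat -> nat) :
  strictly_decreasing u -> increasing_index phi -> strictly_decreasing (fun n => u (phi n)).
Proof. intros Hu Hphi n m Hnm. apply Hu, Hphi, Hnm. Qed.

Lemma strictly_decreasing_le_first (u : nat -> R) :
  (forall i, u (S i) < u i) -> forall n, u n <= u 0%nat.
Proof. intros Hu n. induction n; [lra|]. specialize (Hu n). lra. Qed.

Lemma iterate_choice (P : nat -> Prop) (Rel : nat -> nat -> Prop) (n0 : nat) :
  P n0 -> (forall n, P n -> exists m, (n < m)%nat /\ P m /\ Rel n m) ->
  exists phi, increasing_index phi /\ forall i, P (phi i) /\ Rel (phi i) (phi (S i)).
Proof.
  intros H0 Hnext.
  assert (Hc : forall n, exists m, P n -> (n < m)%nat /\ P m /\ Rel n m).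
  { intro n. destruct (classic (P n)) as [Hn|Hn].
    - destruct (Hnext n Hn) as [m Hm]. exists m. auto.
    - exists n. intro. contradiction. }
  destruct (functional_choice _ Hc) as [c Hc'].
  set (phi i := Nat.iter i c n0).
  assert (HP : forall i, P (phi i)).
  { induction i; [exact H0 | apply Hc'; exact IHi]. }
  exists phi. split.
  - intros n m. apply (succ_chain lt phi); [intros; lia|]. intro i. apply (Hc' _ (HP i)).
  - intro i. split; [apply HP | apply (Hc' _ (HP i))].
Qed.

Lemma monotone_subseq (x : nat -> R) :
  exists phi, increasing_index phi /\
    (strictly_decreasing (fun n => x (phi n)) \/ nondecreasing (fun n => x (phi n))).
Proof.
  set (peak n := forall m, (n < m)%nat -> x m < x n).
  destruct (classic (forall N, exists n, (N <= n)%nat /\ peak n)) as [Hpeaks|Hfinite].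
  - destruct (Hpeaks 0%nat) as [n0 [_ Hn0]].
    destruct (iterate_choice peak (fun _ _ => True) n0 Hn0) as [phi [Hphi HP]].
    { intros n _. destruct (Hpeaks (S n)) as [m [Hm Pm]]. exists m. repeat split; auto. }
    exists phi. split; [exact Hphi|]. left. intros n m Hnm. apply (HP n), Hphi, Hnm.
  - apply not_all_ex_not in Hfinite. destruct Hfinite as [N HN].
    destruct (iterate_choice (fun n => (N <= n)%nat) (fun n m => x n <= x m) N)
      as [phi [Hphi HP]]; [lia| |].
    { intros n Hn. destruct (classic (exists m, (n < m)%nat /\ x n <= x m)) as [[m Hm]|Hno].
      - exists m. intuition lia.
      - exfalso. apply HN. exists n. split; [exact Hn|].
        intros m Hm. apply Rnot_le_lt. intro. apply Hno. eauto. }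
    exists phi. split; [exact Hphi|]. right. intros n m.
    apply (succ_chain Rle (fun n => x (phi n))); [intros; lra|]. intro i. apply HP.
Qed.

Lemma ordinal_decreasingI (D : R -> Prop) (h : R -> R) :
  (forall u, (forall n, D (u n)) -> strictly_decreasing u ->
     ~ strictly_decreasing (fun n => h (u n))) ->
  ordinal_decreasing D h.
Proof.
  intros Hno [u [HD [Hu Hh]]].
  apply (Hno u HD); apply strictly_decreasing_succ; assumption.
Qed.

Lemma ordinal_decreasing_no_descent (D : R -> Prop) (h : R -> R) (u : nat -> R) :
  ordinal_decreasing D h -> (forall n, D (u n)) -> strictly_decreasing u ->
  ~ strictly_decreasing (fun n => h (u n)).
Proof.
  intros Hod HD Hu Hh. apply Hod. exists u.
  repeat split; [exact HD | intro n; apply Hu | intro n; apply Hh]; lia.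
Qed.

Lemma ordinal_decreasing_sub (D D' : R -> Prop) (h : R -> R) :
  (forall x, D' x -> D x) -> ordinal_decreasing D h -> ordinal_decreasing D' h.
Proof.
  intros Hsub Hod. apply ordinal_decreasingI. intros u HD.
  apply (ordinal_decreasing_no_descent D); auto.
Qed.

Lemma ordinal_decreasing_ext (D : R -> Prop) (h h' : R -> R) :
  (forall x, D x -> h x = h' x) -> ordinal_decreasing D h -> ordinal_decreasing D h'.
Proof.
  intros Heq Hod. apply ordinal_decreasingI. intros u HD Hu Hh'.
  apply (ordinal_decreasing_no_descent D h u Hod HD Hu).
  intros n m Hnm. rewrite !Heq by apply HD. apply Hh', Hnm.
Qed.

Lemma ordinal_decreasing_from_le (D : R -> Prop) (h : R -> R) :
  (forall x, D x -> ordinal_decreasing (fun y => y <= x) h) -> ordinal_decreasing D h.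
Proof.
  intros Hle [u [HD [Hu Hh]]]. apply (Hle (u 0%nat) (HD 0%nat)).
  exists u. repeat split; auto. apply strictly_decreasing_le_first, Hu.
Qed.

Lemma ordinal_decreasing_glue (z b : R) (h : R -> R) :
  ordinal_decreasing (fun x => x < z) h -> ordinal_decreasing (fun x => z <= x <= b) h ->
  ordinal_decreasing (fun x => x <= b) h.
Proof.
  intros Hlt Hge [u [Hb [Hu Hh]]].
  destruct (classic (exists N, u N < z)) as [[N HN]|Hnone].
  - apply Hlt. exists (fun n => u (N + n)%nat).
    repeat split; intro n; rewrite ?Nat.add_succ_r; [|apply Hu|apply Hh].
    enough (u (N + n)%nat <= u N) by lra.
    induction n; [rewrite Nat.add_0_r; lra|].
    rewrite Nat.add_succ_r. specialize (Hu (N + n)%nat). lra.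
  - apply Hge. exists u. split; [|auto]. intro n. split; [|apply Hb].
    apply Rnot_lt_le. intro Hn. apply Hnone. eauto.
Qed.

Lemma ordinal_decreasing_increasing_subseq (D : R -> Prop) (h : R -> R) (p : nat -> R) :
  ordinal_decreasing D h -> (forall n, D (p n)) -> strictly_decreasing (fun n => h (p n)) ->
  exists phi, increasing_index phi /\ strictly_increasing (fun n => p (phi n)).
Proof.
  intros Hod HD Hh. destruct (monotone_subseq p) as [phi [Hphi [Hdec|Hnd]]].
  - exfalso. apply (ordinal_decreasing_no_descent D h _ Hod (fun n => HD (phi n)) Hdec).
    apply (strictly_decreasing_comp (fun n => h (p n))); assumption.
  - exists phi. split; [exact Hphi|]. intros n m Hnm.
    destruct (Rle_lt_or_eq_dec _ _ (Hnd n m Hnm)) as [Hlt|Heq]; [exact Hlt|].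
    exfalso. pose proof (Hh _ _ (Hphi n m Hnm)) as Hne. simpl in Hne. rewrite Heq in Hne. lra.
Qed.

Lemma inv_INR_S_pos (n : nat) : 0 < / INR (S n).
Proof. apply Rinv_0_lt_compat, lt_0_INR. lia. Qed.

Lemma inv_INR_S_eventually_lt (c : R) :
  0 < c -> exists N, forall n, (N <= n)%nat -> / INR (S n) < c.
Proof.
  intro Hc. destruct (archimed_cor1 c Hc) as [N [HN HN0]]. exists N. intros n Hn.
  eapply Rle_lt_trans; [|exact HN].
  apply Rinv_le_contravar; [apply lt_0_INR; lia | apply le_INR; lia].
Qed.

Lemma vanishing_pos_decreasing_subseq (t : nat -> R) :
  (forall n, 0 < t n < / INR (S n)) ->
  exists phi, increasing_index phi /\ strictly_decreasing (fun n => t (phi n)).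
Proof.
  intro Ht. destruct (monotone_subseq t) as [phi [Hphi [Hdec|Hnd]]]; [eauto|].
  exfalso. destruct (inv_INR_S_eventually_lt (t (phi 0%nat))) as [N HN]; [apply Ht|].
  pose proof (Hnd 0%nat (S N) ltac:(lia)). pose proof (Ht (phi (S N))).
  pose proof (increasing_index_ge phi Hphi (S N)).
  pose proof (HN (phi (S N)) ltac:(lia)). simpl in *. lra.
Qed.

Lemma right_vanishing_nondecreasing_const (u : nat -> R) (z : R) (phi : nat -> nat) :
  (forall n, z <= u n < z + / INR (S n)) -> increasing_index phi ->
  nondecreasing (fun n => u (phi n)) -> forall n, u (phi n) = z.
Proof.
  intros Hu Hphi Hnd n.
  destruct (Rle_lt_or_eq_dec _ _ (proj1 (Hu (phi n)))) as [Hlt|Heq]; [|auto].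
  exfalso. destruct (inv_INR_S_eventually_lt (u (phi n) - z)) as [N HN]; [lra|].
  pose proof (Hnd n (S (N + n)) ltac:(lia)). pose proof (Hu (phi (S (N + n)))).
  pose proof (increasing_index_ge phi Hphi (S (N + n))).
  pose proof (HN (phi (S (N + n))) ltac:(lia)). simpl in *. lra.
Qed.

Lemma right_approach_decreasing_subseq (h : R -> R) (u : nat -> R) (z : R) :
  (forall n, z <= u n < z + / INR (S n)) -> (forall n, 0 < h (u n) < / INR (S n)) ->
  exists chi, increasing_index chi /\
    strictly_decreasing (fun n => u (chi n)) /\ strictly_decreasing (fun n => h (u (chi n))).
Proof.
  intros Hu Hh.
  destruct (vanishing_pos_decreasing_subseq (fun n => h (u n)) Hh) as [phi [Hphi Hdec]].
  destruct (monotone_subseq (fun n => u (phi n))) as [psi [Hpsi [Hudec|Hnd]]].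
  - exists (fun n => phi (psi n)). repeat split.
    + intros n m Hnm. apply Hphi, Hpsi, Hnm.
    + exact Hudec.
    + apply (strictly_decreasing_comp (fun n => h (u (phi n)))); assumption.
  - exfalso.
    assert (Hconst := right_vanishing_nondecreasing_const u z (fun n => phi (psi n)) Hu
                        ltac:(intros n m Hnm; apply Hphi, Hpsi, Hnm) Hnd).
    pose proof (Hdec _ _ (Hpsi 0%nat 1%nat ltac:(lia))) as Hlt. simpl in Hlt.
    rewrite (Hconst 0%nat), (Hconst 1%nat) in Hlt. lra.
Qed.

(* If u_n -> z+ with t(u_n) <= u_n - z, some subsequence makes u and t(u) both
   strictly decrease. *)
Lemma ordinal_decreasing_pos_gt_gap (t : R -> R) (z e0 : R) :
  0 < e0 -> ordinal_decreasing (fun u => z <= u < z + e0) t ->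
  (forall u, z <= u < z + e0 -> 0 < t u) ->
  exists e, 0 < e /\ forall u, z <= u < z + e -> u - z < t u.
Proof.
  intros He0 Hod Hpos. apply NNPP. intro Hno.
  assert (Hbad : forall n, exists u, z <= u < z + Rmin e0 (/ INR (S n)) /\ t u <= u - z).
  { intro n. apply NNPP. intro Hn. apply Hno. exists (Rmin e0 (/ INR (S n))).
    split; [apply Rmin_glb_lt; [exact He0 | apply inv_INR_S_pos]|].
    intros u Hu. apply Rnot_le_lt. intro Htu. apply Hn. eauto. }
  destruct (functional_choice _ Hbad) as [u Hu].
  assert (Hdom : forall n, z <= u n < z + e0 /\ u n < z + / INR (S n)).
  { intro n. pose proof (Rmin_l e0 (/ INR (S n))). pose proof (Rmin_r e0 (/ INR (S n))).
    destruct (Hu n) as [Hun _]. lra. }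
  destruct (right_approach_decreasing_subseq t u z) as [chi [_ [Hudec Htdec]]].
  - intro n. destruct (Hdom n) as [[H1 _] H2]. lra.
  - intro n. pose proof (Hpos (u n) (proj1 (Hdom n))). pose proof (Hdom n).
    destruct (Hu n) as [_ Htu]. lra.
  - apply (ordinal_decreasing_no_descent _ t _ Hod (fun n => proj1 (Hdom (chi n))) Hudec Htdec).
Qed.

Lemma real_induction (P : R -> Prop) (x0 : R) :
  (forall x y, y <= x -> P x -> P y) -> P x0 ->
  (forall z, (forall y, y < z -> P y) -> exists y, z < y /\ P y) ->
  forall x, P x.
Proof.
  intros Hdown H0 Hstep x1. apply NNPP. intro Hx1.
  assert (Hbound : forall y, ~ P y -> is_upper_bound P y).
  { intros y Hy x Hx. apply Rnot_lt_le. intro Hlt. apply Hy, (Hdown x); [lra | exact Hx]. }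
  destruct (completeness P) as [z [Hz Hlub]]; [exists x1; auto | exists x0; exact H0 |].
  assert (Hbelow : forall y, y < z -> P y).
  { intros y Hy. apply NNPP. intro Hy'. pose proof (Hlub y (Hbound y Hy')). lra. }
  destruct (Hstep z Hbelow) as [y [Hzy Hy]]. pose proof (Hz y Hy). lra.
Qed.

Scheme Eval_mut := Induction for Eval Sort Prop
  with Chain_mut := Induction for Chain Sort Prop.

Section Algorithm.

Variables (k : nat) (f s : R -> R) (g : nat -> R -> R).

Notation Ev := (Eval k f s g).
Notation Ch := (Chain k f s g).

Lemma eval_deterministic x v w : Ev x v -> Ev x w -> v = w.
Proof.
  intro Hv. revert w.
  induction Hv using Eval_mut with (P0 := fun x j a _ => forall b, Ch x j b -> a = b).
  - intros w Hw. inversion Hw; [reflexivity | lra].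
  - intros w Hw. inversion Hw as [| ? a' _ Ha' _]; [lra|].
    rewrite (IHHv _ Ha'). reflexivity.
  - intros b Hb. inversion Hb as [? ? Hb' | ? ? ? ? Hj]; [auto | lia].
  - intros b' Hb'. inversion Hb' as [? ? ? Hj | ? ? b'' ? _ Hb'' _ Ha']; [lia|].
    rewrite <- (IHHv _ Hb'') in Ha'. auto.
Qed.

Definition terminates (x : R) : Prop := exists v, Ev x v.

Definition result (x : R) : R := epsilon (inhabits 0) (fun v => Ev x v).

Lemma result_spec x : terminates x -> Ev x (result x).
Proof. apply (epsilon_spec (inhabits 0) (fun v => Ev x v)). Qed.

Lemma result_eq x v : Ev x v -> result x = v.
Proof. intro H. apply (eval_deterministic x); [apply result_spec; exists v |]; exact H. Qed.

Hypothesis Hk : (1 <= k)%nat.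
Hypothesis Hf : ordinal_decreasing (fun x => x < 0) f.
Hypothesis Hf_pos : forall x, x < 0 -> 0 < f x.
Hypothesis Hg : forall i, (1 <= i <= k)%nat -> ordinal_decreasing (fun x => x < 0) (g i).
Hypothesis Hg_pos : forall i, (1 <= i <= k)%nat -> forall x, x < 0 -> 0 < g i x.
Hypothesis Hs : ordinal_decreasing (fun x => 0 <= x) s.
Hypothesis Hs_pos : forall x, 0 <= x -> 0 < s x.

Lemma eval_pos x v : Ev x v -> 0 < v.
Proof. intro H. destruct H; [auto | apply (Hg_pos 1%nat); [lia | auto]]. Qed.

Lemma result_pos x : terminates x -> 0 < result x.
Proof. intro H. apply (eval_pos x), result_spec, H. Qed.

(* The d-th innermost recursive call of M(u) is made at u - shift d u, and
   M(u) itself is shift k u (see [eval_shift]). *)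
Fixpoint shift (d : nat) (u : R) : R :=
  match d with
  | O => s u
  | S d' => g (k - d')%nat (- result (u - shift d' u))
  end.

Lemma shift_top u : shift k u = g 1%nat (- result (u - shift (k - 1) u)).
Proof.
  rewrite <- (Nat.sub_add 1 k Hk) at 1. rewrite Nat.add_1_r. simpl.
  now replace (k - (k - 1))%nat with 1%nat by lia.
Qed.

Definition settled_upto (x : R) : Prop :=
  (forall y, y <= x -> terminates y) /\ ordinal_decreasing (fun y => y <= x) result.

Section Threshold.

Variable z : R.
Hypothesis Hz : 0 <= z.
Hypothesis Hterm : forall y, y < z -> terminates y.
Hypothesis Hod : ordinal_decreasing (fun y => y < z) result.

Definition inner_below (d : nat) (u : R) : Prop :=
  forall d', (d' < d)%nat -> u - shift d' u < z.

Lemma result_pos_below y : y < z -> 0 < result y.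
Proof. intro Hy. apply result_pos, Hterm, Hy. Qed.

Lemma shift_pos d u : (d <= k)%nat -> z <= u -> inner_below d u -> 0 < shift d u.
Proof.
  destruct d as [|d]; intros Hd Hu Hb; simpl.
  - apply Hs_pos. lra.
  - apply Hg_pos; [lia|].
    enough (0 < result (u - shift d u)) by lra. apply result_pos_below, Hb. lia.
Qed.

Lemma chain_shift u d :
  (d < k)%nat -> inner_below (S d) u -> Ch u (k - d) (result (u - shift d u)).
Proof.
  induction d as [|d IH]; intros Hd Hb.
  - rewrite Nat.sub_0_r. apply Chain_base, result_spec, Hterm, Hb. lia.
  - assert (Hsucc : S (k - S d) = (k - d)%nat) by lia.
    apply Chain_step with (b := result (u - shift d u)); [lia | rewrite Hsucc | |].
    + apply IH; [lia|]. intros d' Hd'. apply Hb. lia.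
    + enough (0 < result (u - shift d u)) by lra. apply result_pos_below, Hb. lia.
    + rewrite Hsucc. apply result_spec, Hterm, (Hb (S d)). lia.
Qed.

Lemma eval_shift u : z <= u -> inner_below k u -> Ev u (shift k u).
Proof.
  intros Hu Hb. rewrite shift_top. apply Eval_nonneg; [lra | |].
  - replace 1%nat with (k - (k - 1))%nat at 1 by lia.
    apply chain_shift; [lia|]. now replace (S (k - 1)) with k by lia.
  - enough (0 < result (u - shift (k - 1) u)) by lra. apply result_pos_below, Hb. lia.
Qed.

Lemma shift_ordinal_decreasing d :
  (d <= k)%nat -> ordinal_decreasing (fun u => z <= u /\ inner_below d u) (shift d).
Proof.
  induction d as [|d IH]; intro Hd.
  - apply (ordinal_decreasing_sub (fun x => 0 <= x)); [intros u [Hu _]; lra | exact Hs].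
  - apply ordinal_decreasingI. intros u Hu Hudec Hshift.
    assert (Hinner : forall n, u n - shift d (u n) < z) by (intro n; apply Hu; lia).
    destruct (ordinal_decreasing_increasing_subseq (fun x => x < 0) (g (k - d)%nat)
                (fun n => - result (u n - shift d (u n)))) as [phi [Hphi Hres]];
      [apply Hg; lia | intro n; pose proof (result_pos_below _ (Hinner n)); lra | exact Hshift |].
    destruct (ordinal_decreasing_increasing_subseq _ result
                (fun n => u (phi n) - shift d (u (phi n))) Hod) as [psi [Hpsi Hinc]];
      [intro n; apply Hinner | intros n m Hnm; specialize (Hres n m Hnm); simpl in *; lra |].
    apply (ordinal_decreasing_no_descent _ _ (fun n => u (phi (psi n))) (IH ltac:(lia))).
    + intro n. split; [apply Hu|]. intros d' Hd'. apply Hu. lia.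
    + apply (strictly_decreasing_comp (fun n => u (phi n))); [|exact Hpsi].
      apply strictly_decreasing_comp; assumption.
    + intros n m Hnm. specialize (Hinc n m Hnm).
      pose proof (Hudec _ _ (Hphi _ _ (Hpsi n m Hnm))). simpl in *. lra.
Qed.

Lemma inner_below_near d :
  (d <= k)%nat -> exists e, 0 < e /\ forall u, z <= u < z + e -> inner_below d u.
Proof.
  induction d as [|d IH]; intro Hd.
  - exists 1. split; [lra|]. intros u _ d' Hd'. lia.
  - destruct IH as [e0 [He0 Hb]]; [lia|].
    destruct (ordinal_decreasing_pos_gt_gap (shift d) z e0 He0) as [e1 [He1 Hgap]].
    + apply (ordinal_decreasing_sub (fun u => z <= u /\ inner_below d u));
        [intros u Hu; split; [lra | apply Hb, Hu] | apply shift_ordinal_decreasing; lia].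
    + intros u Hu. apply shift_pos; [lia | lra | apply Hb, Hu].
    + exists (Rmin e0 e1). split; [apply Rmin_glb_lt; assumption|].
      intros u Hu d' Hd'. pose proof (Rmin_l e0 e1). pose proof (Rmin_r e0 e1).
      destruct (Nat.eq_dec d' d) as [->|Hne].
      * pose proof (Hgap u ltac:(lra)). lra.
      * apply Hb; [lra | lia].
Qed.

Lemma result_ordinal_decreasing_right :
  ordinal_decreasing (fun u => z <= u /\ inner_below k u) result.
Proof.
  apply (ordinal_decreasing_ext _ (shift k)); [|apply shift_ordinal_decreasing; lia].
  intros u [Hu Hb]. symmetry. apply result_eq, eval_shift; assumption.
Qed.

Lemma settled_beyond : exists y, z < y /\ settled_upto y.
Proof.
  destruct (inner_below_near k (le_n k)) as [e [He Hb]].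
  exists (z + e / 2). split; [lra | split].
  - intros y Hy. destruct (Rlt_le_dec y z) as [Hlt|Hge]; [auto|].
    exists (shift k y). apply eval_shift; [lra | apply Hb; lra].
  - apply (ordinal_decreasing_glue z); [exact Hod|].
    apply (ordinal_decreasing_sub (fun u => z <= u /\ inner_below k u));
      [intros u Hu; split; [lra | apply Hb; lra] | exact result_ordinal_decreasing_right].
Qed.

End Threshold.

Lemma settled_upto_le x y : y <= x -> settled_upto x -> settled_upto y.
Proof.
  intros Hyx [Hterm Hod]. split.
  - intros y' Hy'. apply Hterm. lra.
  - apply (ordinal_decreasing_sub (fun u => u <= x)); [intros u Hu; lra | exact Hod].
Qed.

Lemma settled_upto_neg x : x < 0 -> settled_upto x.
Proof.
  intro Hx. split.
  - intros y Hy. exists (f y). apply Eval_neg. lra.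
  - apply (ordinal_decreasing_ext _ f).
    + intros y Hy. symmetry. apply result_eq, Eval_neg. lra.
    + apply (ordinal_decreasing_sub (fun u => u < 0)); [intros u Hu; lra | exact Hf].
Qed.

Lemma settled_everywhere x : settled_upto x.
Proof.
  apply (real_induction settled_upto (-1)); [apply settled_upto_le | apply settled_upto_neg; lra |].
  intros z Hbelow. destruct (Rlt_le_dec z 0) as [Hneg|Hnn].
  - exists (z / 2). split; [lra | apply settled_upto_neg; lra].
  - apply (settled_beyond z Hnn).
    + intros y Hy. apply (Hbelow y Hy). lra.
    + apply ordinal_decreasing_from_le. intros y Hy. apply (Hbelow y Hy).
Qed.

End Algorithm.

Theorem theorem1 (k : nat) (f s : R -> R) (g : nat -> R -> R) :
  (1 <= k)%nat ->
  ordinal_decreasing (fun x => x < 0) f ->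
  (forall x, x < 0 -> 0 < f x) ->
  (forall i, (1 <= i <= k)%nat -> ordinal_decreasing (fun x => x < 0) (g i)) ->
  (forall i, (1 <= i <= k)%nat -> forall x, x < 0 -> 0 < g i x) ->
  ordinal_decreasing (fun x => 0 <= x) s ->
  (forall x, 0 <= x -> 0 < s x) ->
  (forall x : R, exists v : R, Eval k f s g x v) /\
  (forall x v w, Eval k f s g x v -> Eval k f s g x w -> v = w) /\
  (forall M : R -> R, (forall x, Eval k f s g x (M x)) ->
     ordinal_decreasing (fun _ => True) M).
Proof.
  intros Hk Hf Hf_pos Hg Hg_pos Hs Hs_pos.
  pose proof (settled_everywhere k f s g Hk Hf Hf_pos Hg Hg_pos Hs Hs_pos) as Hsettled.
  split; [|split].
  - intro x. apply (proj1 (Hsettled x)). lra.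
  - apply eval_deterministic.
  - intros M HM. apply (ordinal_decreasing_ext _ (result k f s g)).
    + intros x _. apply result_eq, HM.
    + apply ordinal_decreasing_from_le. intros x _. apply Hsettled.
Qed.
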